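(* Assume (H1) and (H2) from the context hold, let $c>c^*$, and let $\gamma\in(1,2)$ satisfy $\Phi(\gamma\Lambda_c)<c$ and $M_i(\gamma\Lambda_c)>0$ for $i=1,\dots,N$. Then for each $i=1,\dots,N$, $$\frac{M_i(\Lambda_c)}{(\lambda_{1i}+\Lambda_c)\nu^i_{\Lambda_c}}+\frac{M_i(\Lambda_c)}{(\lambda_{2i}-\Lambda_c)\nu^i_{\Lambda_c}}-\frac{M_i(\gamma\Lambda_c)}{(\lambda_{1i}+\gamma\Lambda_c)\nu^i_{\gamma\Lambda_c}}-\frac{M_i(\gamma\Lambda_c)}{(\lambda_{2i}-\gamma\Lambda_c)\nu^i_{\gamma\Lambda_c}}>0.$$
   Context: Let $N\ge1$ and $D=\mathrm{diag}(d_1,\dots,d_N)$ with $d_i>0$. Vector inequalities are componentwise; $u\gg0$ means all components positive; $[0,r]=\{u:0\le u\le r\}$. (H1) - $k^+\gg0$; $f:[0,k^+]\to\mathbb{R}^N$ is continuous and piecewise twice continuously differentiable; solutions of $u_t=Du_{xx}+f(u)$ with data continuous in $[0,k^+]$ exist globally and stay in $[0,k^+]$. - $0\ll k^-\le k\le k^+$; continuous piecewise $C^2$ maps $f^\pm:[0,k^\pm]\to\mathbb{R}^N$ satisfy $f^-\le f\le f^+$ on $[0,k^+]$. - $f(0)=f(k)=0$, $f^\pm(0)=f^\pm(k^\pm)=0$, with no other positive equilibria between $0$ and $k$, respectively $k^\pm$. - $f^\pm$ are cooperative on $[0,k^\pm]$ and share with $f$ the Jacobian $f'(0)$ at $0$.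 (H2) - $A_\lambda=(a^{ij}_\lambda)=\mathrm{diag}(d_i\lambda^2)+f'(0)$ is block lower triangular for $\lambda>0$, with irreducible or $1\times1$ zero diagonal blocks. - Its first block has positive principal eigenvalue $\Psi(A_\lambda)$ (where $\Psi(A)=\rho(A+\alpha I)-\alpha$, $A+\alpha I\ge0$), strictly larger than those of the other blocks. - An eigenvector $\nu_\lambda=(\nu^i_\lambda)\gg0$ for $\Psi(A_\lambda)$ exists and is continuous in $\lambda$. Speeds. $\Phi(\lambda)=\Psi(A_\lambda)/\lambda$ and $c^*=\inf_{\lambda>0}\Phi$. For $c>c^*$, $\Lambda_c$ is the smallest positive solution of $\Phi(\lambda)=c$. Constants. $\beta>\max\{|\partial_if_j(u)|:u\in[0,k^+]\}$ is a fixed, sufficiently large constant. Set $\lambda_{1i}=\frac{-c+\sqrt{c^2+4\beta d_i}}{2d_i}$ and $\lambda_{2i}=\frac{c+\sqrt{c^2+4\beta d_i}}{2d_i}$, with $\lambda_{2i}>\lambda_{1i}>2\Lambda_c$. The quantity $M_i$. $M_i(\lambda)=\beta\nu^i_\lambda-\nu^i_\lambda d_i\lambda^2+\sum_{j=1}^N\nu^j_\lambda a^{ij}_\lambda$. *)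

From HB Require Import structures.
From mathcomp Require Import all_boot all_order all_algebra.
From mathcomp Require Import all_classical all_reals all_analysis.
From mathcomp Require Import complex.
Set Implicit Arguments.
Unset Strict Implicit.
Unset Printing Implicit Defensive.
Import Order.TTheory GRing.Theory Num.Theory.
Import numFieldNormedType.Exports.
Local Open Scope ring_scope.
Local Open Scope classical_set_scope.

Section Defs.
Variable R : realType.

(* States u in R^N are row vectors 'rV[R]_N; u 0 i is the i-th component. *)

Definition box (N : nat) (a b : 'rV[R]_N) : set 'rV[R]_N :=
  [set u | forall i, a 0 i <= u 0 i <= b 0 i].

Definition vpos (N : nat) (u : 'rV[R]_N) : Prop := forall i, 0 < u 0 i.

Definition vle (N : nat) (u v : 'rV[R]_N) : Prop := forall i, u 0 i <= v 0 i.

Definition spec_rad (n : nat) (B : 'M[R]_n) : R :=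
  sup [set Normc.normc z | z in
        [set z : R[i] | eigenvalue (map_mx (real_complex R) B) z]].

(* Psi(A) = rho(A + alpha I) - alpha, with alpha chosen large enough that the
   diagonal of A + alpha I is nonnegative (for a matrix with nonnegative
   off-diagonal entries this makes A + alpha I >= 0). *)
Definition Psi (n : nat) (A : 'M[R]_n) : R :=
  let alpha := \sum_(i < n) `|A i i| in spec_rad (A + alpha%:M) - alpha.

Definition submx_on (n : nat) (A : 'M[R]_n) (S : {set 'I_n}) : 'M[R]_#|S| :=
  \matrix_(i, j) A (enum_val i) (enum_val j).

Definition irreducible_on (n : nat) (A : 'M[R]_n) (S : {set 'I_n}) : Prop :=
  forall T : {set 'I_n}, T \proper S -> T != finset.set0 ->
    exists i j, [/\ i \in T, j \in S :\: T & A i j != 0].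

Definition zero1x1_on (n : nat) (A : 'M[R]_n) (S : {set 'I_n}) : Prop :=
  #|S| = 1%N /\ forall i, i \in S -> A i i = 0.

Definition block (n : nat) (blk : 'I_n -> nat) (k : nat) : {set 'I_n} :=
  [set i | blk i == k].

Definition block_lower_tri (n : nat) (A : 'M[R]_n) (blk : 'I_n -> nat) : Prop :=
  (forall i j : 'I_n, (i <= j)%N -> (blk i <= blk j)%N) /\
  (forall i j : 'I_n, (blk i < blk j)%N -> A i j = 0) /\
  (forall k, block blk k != finset.set0 ->
     irreducible_on A (block blk k) \/ zero1x1_on A (block blk k)).

(* f is cooperative on the box [0,r]: f_i is nondecreasing in u_j, j <> i *)
Definition cooperative (N : nat) (f : 'rV[R]_N -> 'rV[R]_N) (r : 'rV[R]_N) : Prop :=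
  forall u v i, box 0 r u -> box 0 r v -> vle u v -> u 0 i = v 0 i ->
    f u 0 i <= f v 0 i.

(* J is the Jacobian of F at 0, the derivative being taken within [0,r]:
   F u = F 0 + J u + o(|u|) for u in [0,r] (J acts on column vectors,
   J i j = d f_i / d u_j (0)) *)
Definition jacobian_at0 (N : nat) (F : 'rV[R]_N -> 'rV[R]_N) (r : 'rV[R]_N)
    (J : 'M[R]_N) : Prop :=
  forall e : R, 0 < e -> exists2 dl : R, 0 < dl &
    forall u, box 0 r u -> `|u| < dl -> `|F u - F 0 - u *m J^T| <= e * `|u|.

(* u (t, x) is a classical solution on t >= 0 of u_t = D u_xx + f(u), u(0,.) = u0 *)
Definition rd_solution (N : nat) (d : 'I_N -> R) (f : 'rV[R]_N -> 'rV[R]_N)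
    (u0 : R -> 'rV[R]_N) (u : R -> R -> 'rV[R]_N) : Prop :=
  [/\ (forall x, u 0 x = u0 x),
      {within [set p : R * R | 0 <= p.1], continuous (fun p => u p.1 p.2)} &
      forall (t x : R), 0 < t -> forall i, exists ut uxx : R,
        [/\ is_derive t (1 : R) (fun s => u s x 0 i) ut,
            exists ux : R -> R,
              (forall y : R, is_derive y (1 : R) (fun z => u t z 0 i) (ux y)) /\
              is_derive x (1 : R) ux uxx
          & ut = d i * uxx + f (u t x) 0 i]].

Definition global_invariant (N : nat) (d : 'I_N -> R) (f : 'rV[R]_N -> 'rV[R]_N)
    (kp : 'rV[R]_N) : Prop :=
  forall u0 : R -> 'rV[R]_N, continuous u0 -> (forall x, box 0 kp (u0 x)) ->
    exists u, rd_solution d f u0 u /\ forall t x, 0 <= t -> box 0 kp (u t x).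

Definition Alam (N : nat) (d : 'I_N -> R) (J : 'M[R]_N) (l : R) : 'M[R]_N :=
  diag_mx (\row_i (d i * l ^+ 2)) + J.

Definition Phi (N : nat) (d : 'I_N -> R) (J : 'M[R]_N) (l : R) : R :=
  Psi (Alam d J l) / l.

Definition cstar (N : nat) (d : 'I_N -> R) (J : 'M[R]_N) : R :=
  inf [set Phi d J l | l in `]0, +oo[].

Definition Mi (N : nat) (d : 'I_N -> R) (J : 'M[R]_N) (nu : R -> 'cV[R]_N)
    (beta l : R) (i : 'I_N) : R :=
  beta * nu l i 0 - nu l i 0 * d i * l ^+ 2
  + \sum_(j < N) nu l j 0 * Alam d J l i j.

Definition lam1 (N : nat) (d : 'I_N -> R) (beta c : R) (i : 'I_N) : R :=
  (- c + Num.sqrt (c ^+ 2 + 4 * beta * d i)) / (2 * d i).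

Definition lam2 (N : nat) (d : 'I_N -> R) (beta c : R) (i : 'I_N) : R :=
  (c + Num.sqrt (c ^+ 2 + 4 * beta * d i)) / (2 * d i).

End Defs.

From HB Require Import structures.
From mathcomp Require Import all_boot all_order all_algebra.
From mathcomp Require Import all_classical all_reals all_analysis.
From mathcomp Require Import complex.
From mathcomp Require Import ring lra.
Set Implicit Arguments.
Unset Strict Implicit.
Unset Printing Implicit Defensive.
Import Order.TTheory GRing.Theory Num.Theory.
Import numFieldNormedType.Exports.
Local Open Scope ring_scope.
Local Open Scope classical_set_scope.

(* Using the eigenvector equation, M_i(l) = nu^i_l (beta - d_i l^2 + Psi(A_l)).
   The constants lambda_1i and -lambda_2i are the roots of d_i x^2 + c x - beta,
   so beta + c l - d_i l^2 = d_i (lambda_1i + l)(lambda_2i - l).  Since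
   Psi(A_Lambda) = c Lambda while Psi(A_{gamma Lambda}) < c gamma Lambda, the
   first two terms sum to d_i (lambda_1i + lambda_2i), whereas the last two sum
   to strictly less. *)

Lemma partial_fractions_gap (R : realFieldType) (u1 u2 v1 v2 d P : R) :
  0 < u1 -> 0 < u2 -> 0 < v1 -> 0 < v2 -> u1 + u2 = v1 + v2 ->
  P < d * (v1 * v2) ->
  0 < d * (u1 * u2) / u1 + d * (u1 * u2) / u2 - P / v1 - P / v2.
Proof.
move=> u1_gt0 u2_gt0 v1_gt0 v2_gt0 Esum P_lt.
have -> : d * (u1 * u2) / u1 + d * (u1 * u2) / u2 - P / v1 - P / v2
    = (u1 + u2) * d - (v1 + v2) * (P / (v1 * v2)).
  by field; rewrite ?lt0r_neq0.
rewrite -Esum -mulrBr; apply: mulr_gt0; first exact: addr_gt0.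
by rewrite subr_gt0 ltr_pdivrMr ?mulr_gt0.
Qed.

Section TravellingWaveRates.
Variables (R : realType) (N : nat) (d : 'I_N -> R) (beta c : R) (i : 'I_N).
Hypothesis d_gt0 : 0 < d i.

Lemma lam2_sub_lam1 : lam2 d beta c i - lam1 d beta c i = c / d i.
Proof. by rewrite /lam1 /lam2; field; rewrite lt0r_neq0. Qed.

Lemma lam_disc_gt0 :
  0 < lam1 d beta c i -> lam1 d beta c i < lam2 d beta c i ->
  0 < c ^+ 2 + 4 * beta * d i.
Proof.
move=> l1_gt0 l1_lt_l2.
have c_gt0 : 0 < c.
  have : 0 < c / d i by rewrite -lam2_sub_lam1 subr_gt0.
  by rewrite pmulr_lgt0 ?invr_gt0.
have E1 : lam1 d beta c i * (2 * d i) = Num.sqrt (c ^+ 2 + 4 * beta * d i) - c.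
  by rewrite /lam1; field; rewrite lt0r_neq0.
have : 0 < lam1 d beta c i * (2 * d i) by rewrite pmulr_rgt0 // pmulr_rgt0.
rewrite E1 -[0 < c ^+ 2 + _]sqrtr_gt0; lra.
Qed.

Lemma lam_factor (l : R) :
  0 <= c ^+ 2 + 4 * beta * d i ->
  d i * ((lam1 d beta c i + l) * (lam2 d beta c i - l))
    = beta + c * l - d i * l ^+ 2.
Proof.
move=> disc_ge0.
have Es := sqr_sqrtr disc_ge0.
rewrite /lam1 /lam2.
set s := Num.sqrt _ in Es *.
have -> : beta = (s ^+ 2 - c ^+ 2) / (4 * d i).
  by rewrite Es; field; rewrite lt0r_neq0.
by field; rewrite lt0r_neq0.
Qed.

Lemma Mi_eigen (J : 'M[R]_N) (nu : R -> 'cV[R]_N) (l r : R) :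
  Alam d J l *m nu l = r *: nu l ->
  Mi d J nu beta l i = nu l i 0 * (beta - d i * l ^+ 2 + r).
Proof.
move=> /matrixP/(_ i 0); rewrite !mxE => Eig.
rewrite /Mi (eq_bigr (fun j => Alam d J l i j * nu l j 0)) => [|j _].
  by rewrite Eig; ring.
by rewrite mulrC.
Qed.

End TravellingWaveRates.

Theorem lemma6p2
  (R : realType) (N : nat) (HN : (0 < N)%N)
  (d : 'I_N -> R) (hd : forall i, 0 < d i)
  (f fm fp : 'rV[R]_N -> 'rV[R]_N) (km k kp : 'rV[R]_N) (J : 'M[R]_N)
  (* (H1) *)
  (Hkp : vpos kp)
  (Hfc : {within box 0 kp, continuous f})
  (Hglob : global_invariant d f kp)
  (Hkm : vpos km) (Hkmk : vle km k) (Hkkp : vle k kp)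
  (Hfmc : {within box 0 km, continuous fm})
  (Hfpc : {within box 0 kp, continuous fp})
  (Hfmf : forall u, box 0 km u -> vle (fm u) (f u))
  (Hffp : forall u, box 0 kp u -> vle (f u) (fp u))
  (Hf0 : f 0 = 0) (Hfk : f k = 0)
  (Hfm0 : fm 0 = 0) (Hfmk : fm km = 0)
  (Hfp0 : fp 0 = 0) (Hfpk : fp kp = 0)
  (Hfeq : forall u, box 0 k u -> f u = 0 -> u = 0 \/ u = k)
  (Hfmeq : forall u, box 0 km u -> fm u = 0 -> u = 0 \/ u = km)
  (Hfpeq : forall u, box 0 kp u -> fp u = 0 -> u = 0 \/ u = kp)
  (Hcoopm : cooperative fm km) (Hcoopp : cooperative fp kp)
  (HJ : jacobian_at0 f kp J) (HJm : jacobian_at0 fm km J)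
  (HJp : jacobian_at0 fp kp J)
  (* (H2) *)
  (blk : 'I_N -> nat) (nu : R -> 'cV[R]_N)
  (Hblk : forall l : R, 0 < l -> block_lower_tri (Alam d J l) blk)
  (Hblk0 : block blk 0 != finset.set0)
  (Hpsi : forall l : R, 0 < l ->
     [/\ 0 < Psi (Alam d J l),
         Psi (submx_on (Alam d J l) (block blk 0)) = Psi (Alam d J l) &
         forall kk : nat, kk <> 0%N -> block blk kk != finset.set0 ->
           Psi (submx_on (Alam d J l) (block blk kk)) < Psi (Alam d J l)])
  (Hnu : forall l : R, 0 < l ->
     (forall i, 0 < nu l i 0) /\ Alam d J l *m nu l = Psi (Alam d J l) *: nu l)
  (Hnuc : forall i, {within `]0, +oo[, continuous (fun l => nu l i 0)})
  (* constants and speeds *)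
  (beta c Lam gam : R)
  (Hbeta : forall (u : 'rV[R]_N) (i j : 'I_N) (g : R), box 0 kp u ->
     is_derive u (delta_mx 0 i) (fun v => f v 0 j) g -> `|g| < beta)
  (Hc : cstar d J < c)
  (HLam : [/\ 0 < Lam, Phi d J Lam = c &
             forall l, 0 < l < Lam -> Phi d J l <> c])
  (Hlam : forall i, 2 * Lam < lam1 d beta c i /\ lam1 d beta c i < lam2 d beta c i)
  (Hgam : 1 < gam < 2)
  (HgamPhi : Phi d J (gam * Lam) < c)
  (HgamM : forall i, 0 < Mi d J nu beta (gam * Lam) i) :
  forall i : 'I_N,
    0 < Mi d J nu beta Lam i / ((lam1 d beta c i + Lam) * nu Lam i 0)
        + Mi d J nu beta Lam i / ((lam2 d beta c i - Lam) * nu Lam i 0)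
        - Mi d J nu beta (gam * Lam) i
            / ((lam1 d beta c i + gam * Lam) * nu (gam * Lam) i 0)
        - Mi d J nu beta (gam * Lam) i
            / ((lam2 d beta c i - gam * Lam) * nu (gam * Lam) i 0).
Proof.
move=> i.
have [Lam_gt0 PhiLam _] := HLam.
have /andP[gam_gt1 gam_lt2] := Hgam.
set y := gam * Lam.
have y_gt0 : 0 < y by apply: mulr_gt0 => //; lra.
have Lam_lt_y : Lam < y by rewrite ltr_pMl.
have y_lt_2Lam : y < 2 * Lam by rewrite ltr_pM2r.
have [nuL_gt0 EigL] := Hnu Lam Lam_gt0.
have [nuy_gt0 Eigy] := Hnu y y_gt0.
have PsiL : Psi (Alam d J Lam) = c * Lam.
  by rewrite -PhiLam /Phi mulfVK // lt0r_neq0.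
have Psiy : Psi (Alam d J y) < c * y by move: HgamPhi; rewrite /Phi ltr_pdivrMr.
have [l1_gt l1_lt_l2] := Hlam i.
have l1_gt0 : 0 < lam1 d beta c i by lra.
have /ltW disc := lam_disc_gt0 (hd i) l1_gt0 l1_lt_l2.
have nu_cancel (n P q : R) : 0 < n -> n * P / (q * n) = P / q.
  by move=> n_gt0; rewrite [q * n]mulrC -mulf_div divff ?mul1r ?lt0r_neq0.
rewrite (Mi_eigen _ _ EigL) (Mi_eigen _ _ Eigy) !nu_cancel // PsiL.
rewrite -[beta - _ + c * Lam]addrAC -lam_factor //.
have Py_lt : beta - d i * y ^+ 2 + Psi (Alam d J y)
    < d i * ((lam1 d beta c i + y) * (lam2 d beta c i - y)).
  by rewrite lam_factor // addrAC ltrD2r ltrD2l.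
apply: partial_fractions_gap Py_lt; try lra.
Qed.
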